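(* If QEPmin is in the easy case, then CRQopt has a unique minimizer.
   Context: Let $A\in\mathbb{R}^{n\times n}$ be symmetric, $C\in\mathbb{R}^{n\times m}$ ($m<n$) full column rank, $b\in\mathbb{R}^m$, $n_0=C(C^{\top}C)^{-1}b$ with $\|n_0\|<1$, $\gamma=\sqrt{1-\|n_0\|^2}$, $P=I-C(C^{\top}C)^{-1}C^{\top}$ (orthogonal projector onto $\mathcal N(C^{\top})$), $b_0=PAn_0$, assumed nonzero. CRQopt: minimize $v^{\top}Av$ over $v\in\mathbb{R}^n$ subject to $v^{\top}v=1$ and $C^{\top}v=b$. QEPmin: minimize $\lambda$ over pairs $(\lambda,z)$ with $\lambda\in\mathbb{R}$, $0\neq z\in\mathcal N(C^{\top})$ and $(PAP-\lambda I)^2z=\gamma^{-2}b_0b_0^{\top}z$. QEPmin is in the hard case if it has a minimizer $(\lambda_*,z_* )$ with $b_0^{\top}z_*=0$; otherwise it is in the easy case. *)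

From HB Require Import structures.
From mathcomp Require Import all_boot all_order all_algebra.
From mathcomp Require Import reals.
Set Implicit Arguments. Unset Strict Implicit. Unset Printing Implicit Defensive.
Import Order.TTheory GRing.Theory Num.Theory.
Local Open Scope ring_scope.

Section CRQ.
Variables (R : realType) (n m : nat).
Implicit Types (A : 'M[R]_n) (C : 'M[R]_(n, m)) (b : 'cV[R]_m).

Definition sqnorm (v : 'cV[R]_n) : R := (v^T *m v) 0 0.

Definition n0 C b : 'cV[R]_n := C *m invmx (C^T *m C) *m b.

Definition gam C b : R := Num.sqrt (1 - sqnorm (n0 C b)).

Definition projP C : 'M[R]_n := 1%:M - C *m invmx (C^T *m C) *m C^T.

Definition b0 A C b : 'cV[R]_n := projP C *m A *m n0 C b.

Definition CRQ_feasible C b (v : 'cV[R]_n) : Prop :=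
  sqnorm v = 1 /\ C^T *m v = b.

Definition CRQ_minimizer A C b (v : 'cV[R]_n) : Prop :=
  CRQ_feasible C b v /\
  forall w, CRQ_feasible C b w -> (v^T *m A *m v) 0 0 <= (w^T *m A *m w) 0 0.

Definition QEP_feasible A C b (lam : R) (z : 'cV[R]_n) : Prop :=
  z != 0 /\ C^T *m z = 0 /\
  (let M := projP C *m A *m projP C - lam%:M in
   M *m (M *m z) = (gam C b ^+ 2)^-1 *: (b0 A C b *m (b0 A C b)^T *m z)).

Definition QEP_minimizer A C b (lam : R) (z : 'cV[R]_n) : Prop :=
  QEP_feasible A C b lam z /\
  forall lam' z', QEP_feasible A C b lam' z' -> lam <= lam'.

Definition QEP_hard_case A C b : Prop :=
  exists lam z, QEP_minimizer A C b lam z /\ ((b0 A C b)^T *m z) 0 0 = 0.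

Definition QEP_easy_case A C b : Prop := ~ QEP_hard_case A C b.

End CRQ.

(* Every feasible v of CRQopt is n0 + u with u in N(C^T) and |u|^2 = gamma^2,
   and v^T A v = q(u) + const with q(u) = u^T H u + 2 b0^T u and H = P A P:
   CRQopt is a trust-region subproblem on N(C^T). By compactness it has a
   minimizer u; comparing u with its reflections in hyperplanes of N(C^T)
   yields a multiplier mu with H u + b0 = mu u and H - mu positive
   semidefinite on N(C^T). For feasible x, q(x) - q(u) is the value of the
   form H - mu at x - u, so u is the unique minimizer as soon as H - mu is
   definite on N(C^T). Otherwise H - mu has a null vector w in N(C^T); then
   b0^T w = 0 and (mu, w) solves the QEP. It is a minimal solution: a QEP
   solution (lam, z) with b0^T z <> 0 rescales to a stationary point u' of
   the sphere with multiplier lam, and q(u) <= q(u') forces mu <= lam. Hence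
   the hard case would hold. *)

From HB Require Import structures.
From mathcomp Require Import all_boot all_order all_algebra.
From mathcomp Require Import reals boolp classical_sets topology normedtype derive.
From mathcomp Require Import ring lra.
Import Order.TTheory GRing.Theory Num.Theory.
Import numFieldNormedType.Exports.
Set Implicit Arguments. Unset Strict Implicit. Unset Printing Implicit Defensive.
Local Open Scope ring_scope.

Definition dot {R : pzRingType} {n : nat} (x y : 'cV[R]_n) : R := (x^T *m y) 0 0.

Section DotAlgebra.
Context {R : comNzRingType} {n : nat}.
Implicit Types (x y z : 'cV[R]_n) (M : 'M[R]_n).

Lemma dotE x y : dot x y = \sum_i x i 0 * y i 0.
Proof. by rewrite /dot mxE; apply: eq_bigr => i _; rewrite mxE. Qed.

Lemma dotC x y : dot x y = dot y x.
Proof. by rewrite !dotE; apply: eq_bigr => i _; rewrite mulrC. Qed.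

Lemma dotDl x y z : dot (x + y) z = dot x z + dot y z.
Proof. by rewrite !dotE -big_split; apply: eq_bigr => i _; rewrite mxE mulrDl. Qed.

Lemma dotZl a x y : dot (a *: x) y = a * dot x y.
Proof. by rewrite !dotE mulr_sumr; apply: eq_bigr => i _; rewrite mxE mulrA. Qed.

Lemma dotDr x y z : dot z (x + y) = dot z x + dot z y.
Proof. by rewrite ![dot z _]dotC dotDl. Qed.

Lemma dotZr a x y : dot y (a *: x) = a * dot y x.
Proof. by rewrite ![dot y _]dotC dotZl. Qed.

Lemma dotBl x y z : dot (x - y) z = dot x z - dot y z.
Proof. by rewrite dotDl -scaleN1r dotZl mulN1r. Qed.

Lemma dotBr x y z : dot z (x - y) = dot z x - dot z y.
Proof. by rewrite ![dot z _]dotC dotBl. Qed.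

Lemma dot0l x : dot 0 x = 0.
Proof. by rewrite -(scale0r 0) dotZl mul0r. Qed.

Lemma dot_mulmx p (M : 'M[R]_(n, p)) x (y : 'cV[R]_p) :
  dot x (M *m y) = dot (M^T *m x) y.
Proof. by rewrite /dot trmx_mul trmxK mulmxA. Qed.

Lemma quad_dot M x : (x^T *m M *m x) 0 0 = dot x (M *m x).
Proof. by rewrite /dot mulmxA. Qed.

Lemma dot_mulmx_sym M x y : M^T = M -> dot x (M *m y) = dot y (M *m x).
Proof. by move=> M_sym; rewrite dot_mulmx M_sym dotC. Qed.

Lemma dot_shift M mu x : dot x ((M - mu%:M) *m x) = dot x (M *m x) - mu * dot x x.
Proof. by rewrite mulmxBl mul_scalar_mx dotBr dotZr. Qed.

Lemma mulmx_dot x y z : x *m (y^T *m z) = dot y z *: x.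
Proof. by apply/matrixP => i j; rewrite (ord1 j) !mxE big_ord1 mulrC. Qed.

Lemma dot_addZ x y t :
  dot (x + t *: y) (x + t *: y) = dot x x + 2 * t * dot x y + t ^+ 2 * dot y y.
Proof. by rewrite !dotDl !dotDr !dotZl !dotZr (dotC y x); ring. Qed.

Lemma quad_addZ M x y t : M^T = M ->
  dot (x + t *: y) (M *m (x + t *: y)) =
  dot x (M *m x) + 2 * t * dot y (M *m x) + t ^+ 2 * dot y (M *m y).
Proof.
move=> M_sym; rewrite mulmxDr -scalemxAr !dotDl !dotDr !dotZl !dotZr.
by rewrite (dot_mulmx_sym x y M_sym); ring.
Qed.

End DotAlgebra.

Section DotOrder.
Context {R : realDomainType} {n : nat}.
Implicit Types (x : 'cV[R]_n).

Lemma dot_ge0 x : 0 <= dot x x.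
Proof. by rewrite dotE; apply: sumr_ge0 => i _; rewrite -expr2 sqr_ge0. Qed.

Lemma dot_eq0 x : (dot x x == 0) = (x == 0).
Proof.
apply/idP/eqP => [|->]; last by rewrite dot0l.
rewrite dotE psumr_eq0 => [/allP x0|i _]; last by rewrite -expr2 sqr_ge0.
apply/matrixP => i j; rewrite (ord1 j) mxE.
by apply/eqP; rewrite -sqrf_eq0 expr2; exact: x0 (mem_index_enum i).
Qed.

Lemma dot_gt0 x : (0 < dot x x) = (x != 0).
Proof. by rewrite lt_def dot_ge0 dot_eq0 andbT. Qed.

Lemma coord_sqr_le_dot x i : x i 0 ^+ 2 <= dot x x.
Proof.
rewrite dotE (bigD1 i) //= -expr2 lerDl sumr_ge0 // => j _.
by rewrite -expr2 sqr_ge0.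
Qed.

End DotOrder.

Lemma cubic_near0_ge0 (R : realFieldType) (c0 c1 c2 c3 : R) :
  (forall t, 0 < t -> t <= 1 -> 0 <= c0 + c1 * t + c2 * t ^+ 2 + c3 * t ^+ 3) ->
  0 <= c0.
Proof.
move=> c_ge0; rewrite leNgt; apply/negP => c0_lt0.
pose B := `|c1| + `|c2| + `|c3|.
have bound t : 0 < t -> t <= 1 ->
    c0 + c1 * t + c2 * t ^+ 2 + c3 * t ^+ 3 <= c0 + B * t.
  move=> t_gt0 t_le1.
  have t2 : t ^+ 2 <= t by rewrite expr2 ler_piMl // ltW.
  have t3 : t ^+ 3 <= t.
    by rewrite exprS; apply: ler_piMr; [exact: ltW | exact: le_trans t2 t_le1].
  have := ler_norm c1; have := ler_norm c2; have := ler_norm c3.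
  have := normr_ge0 c1; have := normr_ge0 c2; have := normr_ge0 c3.
  have := exprn_ge0 2 (ltW t_gt0); have := exprn_ge0 3 (ltW t_gt0).
  rewrite /B; nra.
have B_ge0 : 0 <= B by rewrite /B !addr_ge0.
(* This [t] lies in ]0, 1] and gives [c0 + B t <= c0 / 2 < 0]. *)
pose t := - c0 / (2 * (B - c0 + 1)).
have den_gt0 : 0 < 2 * (B - c0 + 1) by lra.
have tE : t * (2 * (B - c0 + 1)) = - c0 by rewrite /t divfK ?gt_eqF.
have t_gt0 : 0 < t by rewrite /t divr_gt0 ?oppr_gt0.
have t_le1 : t <= 1 by rewrite /t ler_pdivrMr // mul1r; lra.
have := le_trans (c_ge0 t t_gt0 t_le1) (bound t t_gt0 t_le1).
nra.
Qed.

Lemma psd_isotropic_ker (R : realFieldType) n p (S : 'M[R]_(p, n)) (M : 'M[R]_n) w :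
  M^T = M -> (forall x : 'cV_n, S *m x = 0 -> S *m (M *m x) = 0) ->
  (forall x, S *m x = 0 -> 0 <= dot x (M *m x)) ->
  S *m w = 0 -> dot w (M *m w) = 0 -> M *m w = 0.
Proof.
move=> M_sym M_stab M_psd Sw w_iso.
set y := M *m w; have Sy : S *m y = 0 by exact: M_stab.
pose B := dot y y; pose c := dot y (M *m y).
have c_ge0 : 0 <= c := M_psd y Sy.
have along t : 0 <= 2 * t * B + t ^+ 2 * c.
  have Swy : S *m (w + t *: y) = 0 by rewrite mulmxDr -scalemxAr Sw Sy scaler0 addr0.
  by have := M_psd _ Swy; rewrite quad_addZ // w_iso add0r.
pose t := - B / (c + 1).
have tE : t * (c + 1) = - B by rewrite /t divfK // gt_eqF // ltr_wpDl.
have := along t; have := dot_ge0 y; rewrite -/B => B_ge0 ineq.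
by apply/eqP; rewrite -dot_eq0 -/B; apply/eqP; nra.
Qed.

Section TrustRegion.
Variables (R : realFieldType) (n p : nat).
Variables (S : 'M[R]_(p, n)) (H : 'M[R]_n) (g : 'cV[R]_n) (N : R).
Implicit Types (u w x z : 'cV[R]_n) (mu lam : R).

Definition trs_obj x := dot x (H *m x) + 2 * dot g x.

Definition trs_feasible x := S *m x = 0 /\ dot x x = N.

Definition trs_minimizer u :=
  trs_feasible u /\ forall x, trs_feasible x -> trs_obj u <= trs_obj x.

Definition psd_on_ker (M : 'M[R]_n) := forall w, S *m w = 0 -> 0 <= dot w (M *m w).

Definition qep_feasible lam z :=
  z != 0 /\ S *m z = 0 /\
  (H - lam%:M) *m ((H - lam%:M) *m z) = N^-1 *: (g *m g^T *m z).

Definition qep_minimizer lam z :=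
  qep_feasible lam z /\ forall lam' z', qep_feasible lam' z' -> lam <= lam'.

Hypothesis H_sym : H^T = H.
Hypothesis SH : S *m H = 0.
Hypothesis Sg : S *m g = 0.
Hypothesis N_gt0 : 0 < N.

Lemma trmx_shift mu : (H - mu%:M)^T = H - mu%:M.
Proof. by rewrite linearB /= tr_scalar_mx H_sym. Qed.

Lemma ker_mulmxH x : S *m x = 0 -> S *m (H *m x) = 0.
Proof. by rewrite mulmxA SH mul0mx. Qed.

Lemma ker_shift mu x : S *m x = 0 -> S *m ((H - mu%:M) *m x) = 0.
Proof.
move=> Sx; rewrite mulmxBl mul_scalar_mx mulmxBr ker_mulmxH //.
by rewrite -scalemxAr Sx scaler0 subr0.
Qed.

Lemma trs_obj_sub u x mu : H *m u + g = mu *: u -> dot x x = dot u u ->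
  trs_obj x - trs_obj u = dot (x - u) ((H - mu%:M) *m (x - u)).
Proof.
move=> stat_u; rewrite dot_shift; move: (x - u) (subrK u x) => d <-.
have gE : g = mu *: u - H *m u by rewrite -stat_u addrC addKr.
rewrite -[d + u]addrC -[d]scale1r dot_addZ /trs_obj quad_addZ // gE !dotBl !dotZl.
rewrite !dotDr !dotZr (dotC (H *m u) d) (dotC (H *m u) u) (dotC u d) !scale1r.
by move=> normE; nra.
Qed.

Lemma trs_minimizer_reflect u w : trs_minimizer u -> S *m w = 0 ->
  0 <= dot w u ^+ 2 * dot w (H *m w) - dot w u * dot w w * dot w (H *m u + g).
Proof.
move=> [[Su norm_u] u_min] Sw.
have [->|w_neq0] := eqVneq w 0; first by rewrite !dot0l; lra.
have D_gt0 : 0 < dot w w by rewrite dot_gt0.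
pose a := dot w u; pose s := -2 * a / dot w w.
have sD : s * dot w w = -2 * a by rewrite /s divfK ?gt_eqF.
(* [u + s w] is the reflection of [u] in the hyperplane orthogonal to [w]. *)
have refl_feas : trs_feasible (u + s *: w).
  split; first by rewrite mulmxDr -scalemxAr Su Sw scaler0 addr0.
  have : s ^+ 2 * dot w w = s * (-2 * a) by rewrite -sD expr2 mulrA.
  by rewrite dot_addZ norm_u (dotC u w) -/a; lra.
have := u_min _ refl_feas; rewrite /trs_obj quad_addZ // dotDr dotZr.
rewrite -/a; set X := dot w (H *m u); set Y := dot w (H *m w); set Z := dot g w.
move=> ineq; rewrite dotDr (dotC w g) -/Z.
have -> : a ^+ 2 * Y - a * dot w w * (X + Z) =
    (dot w w ^+ 2 / 4) * (2 * s * (X + Z) + s ^+ 2 * Y).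
  have aE : a = - (s * dot w w) / 2 by rewrite sD; field.
  by rewrite aE; field.
by apply: mulr_ge0; [rewrite divr_ge0 ?sqr_ge0 | lra].
Qed.

Lemma trs_minimizer_stationary u : trs_minimizer u -> exists mu, H *m u + g = mu *: u.
Proof.
move=> u_min; have [[Su norm_u] _] := u_min.
pose r := H *m u + g; pose mu := dot r u / N.
have Sr : S *m r = 0 by rewrite mulmxDr ker_mulmxH // Sg addr0.
pose w := r - mu *: u.
have rE : r = w + mu *: u by rewrite subrK.
have Sw : S *m w = 0 by rewrite mulmxBr -scalemxAr Sr Su scaler0 subr0.
have wu : dot w u = 0 by rewrite dotBl dotZl norm_u /mu divfK ?subrr ?gt_eqF.
have wr : dot w r = dot w w by rewrite rE dotDr dotZr wu mulr0 addr0.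
have ur : dot u r = mu * N by rewrite rE dotDr dotZr (dotC u w) wu norm_u add0r.
(* [w] is the component of [H u + g] orthogonal to [u]; reflections along
   [w + t u] give [0 <= - |w|^4 + O(t)] as [t -> 0+]. *)
have W_eq0 : dot w w = 0.
  suff : 0 <= - dot w w ^+ 2 by have := sqr_ge0 (dot w w); nra.
  have uH := trs_minimizer_reflect u_min; rewrite -/r in uH; clearbody w r.
  pose P1 := dot w (H *m w); pose P2 := dot u (H *m w); pose P3 := dot u (H *m u).
  apply: (@cubic_near0_ge0 _ _ (N * P1 - mu * N * dot w w)
    (2 * N * P2 - N * dot w w) (N * P3 - mu * N ^+ 2)) => t t_gt0 _.
  have Swt : S *m (w + t *: u) = 0 by rewrite mulmxDr -scalemxAr Sw Su scaler0 addr0.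
  have := uH _ Swt; rewrite quad_addZ // dot_addZ !dotDl !dotZl wu wr ur norm_u.
  rewrite -/P1 -/P2 -/P3 => ineq; rewrite -(pmulr_rge0 _ (mulr_gt0 t_gt0 N_gt0)).
  by apply: (le_trans ineq); rewrite le_eqVlt; apply/orP; left; apply/eqP; ring.
by exists mu; apply/eqP; rewrite -subr_eq0 -/r -/w -dot_eq0 W_eq0.
Qed.

Lemma trs_minimizer_psd u mu : trs_minimizer u -> H *m u + g = mu *: u ->
  psd_on_ker (H - mu%:M).
Proof.
move=> u_min stat_u w Sw; have [[Su norm_u] _] := u_min.
have reflect x : S *m x = 0 -> 0 <= dot x u ^+ 2 * dot x ((H - mu%:M) *m x).
  move=> Sx; have := trs_minimizer_reflect u_min Sx.
  by rewrite stat_u dotZr dot_shift; congr (0 <= _); ring.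
have [wu_eq0|wu_neq0] := eqVneq (dot w u) 0; last first.
  by have := reflect w Sw; rewrite pmulr_rge0 // lt_def sqr_ge0 sqrf_eq0 wu_neq0.
set M := H - mu%:M.
apply: (@cubic_near0_ge0 _ _ (2 * dot u (M *m w)) (dot u (M *m u)) 0) => t t_gt0 _.
have Swt : S *m (w + t *: u) = 0 by rewrite mulmxDr -scalemxAr Sw Su scaler0 addr0.
have := reflect _ Swt; rewrite dotDl dotZl wu_eq0 norm_u add0r.
rewrite pmulr_rge0 ?exprn_gt0 ?mulr_gt0 // quad_addZ ?trmx_shift //.
by rewrite -/M; lra.
Qed.

Lemma trs_minimizer_kkt u : trs_minimizer u ->
  exists2 mu, H *m u + g = mu *: u & psd_on_ker (H - mu%:M).
Proof.
move=> u_min; have [mu stat_u] := trs_minimizer_stationary u_min.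
by exists mu; last exact: trs_minimizer_psd u_min stat_u.
Qed.

Lemma trs_minimizer_unique u x mu :
  trs_feasible u -> H *m u + g = mu *: u ->
  (forall w, S *m w = 0 -> w != 0 -> 0 < dot w ((H - mu%:M) *m w)) ->
  trs_minimizer x -> x = u.
Proof.
move=> [Su norm_u] stat_u pd [[Sx norm_x] x_min].
have obj_le := x_min u (conj Su norm_u).
have objE := trs_obj_sub stat_u (etrans norm_x (esym norm_u)).
apply/eqP; rewrite -subr_eq0; apply: contraTT obj_le => d_neq0.
have Sd : S *m (x - u) = 0 by rewrite mulmxBr Sx Su subrr.
by rewrite -ltNge -subr_gt0 objE; exact: pd.
Qed.

Lemma qep_shift_norm lam z : qep_feasible lam z ->
  dot ((H - lam%:M) *m z) ((H - lam%:M) *m z) = N^-1 * dot g z ^+ 2.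
Proof.
move=> [_ [_ qep]].
rewrite [LHS]dot_mulmx trmx_shift qep -mulmxA mulmx_dot !dotZl (dotC g z).
by rewrite expr2.
Qed.

Lemma qep_feasible_stationary lam z : qep_feasible lam z -> dot g z != 0 ->
  exists u', trs_feasible u' /\ H *m u' + g = lam *: u'.
Proof.
move=> zfeas gz_neq0; have normMz := qep_shift_norm zfeas.
case: zfeas => [_ [Sz qep]]; set M := H - lam%:M in qep normMz.
pose u' := (- (N / dot g z)) *: (M *m z).
have Mu' : M *m u' = - g.
  rewrite /u' -scalemxAr qep -mulmxA mulmx_dot !scalerA -[- g]scaleN1r.
  by congr (_ *: _); field; rewrite gz_neq0 gt_eqF.
exists u'; split; first split.
- by rewrite /u' -scalemxAr ker_shift // scaler0.
- by rewrite /u' dotZl dotZr normMz; field; rewrite gz_neq0 gt_eqF.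
- by apply/eqP; rewrite -subr_eq0 addrAC -mul_scalar_mx -mulmxBl Mu' addNr.
Qed.

Lemma trs_multiplier_le_stationary u u' mu lam :
  trs_minimizer u -> H *m u + g = mu *: u -> psd_on_ker (H - mu%:M) ->
  trs_feasible u' -> H *m u' + g = lam *: u' -> mu <= lam.
Proof.
move=> [[Su norm_u] u_min] stat_u psd [Su' norm_u'] stat_u'.
rewrite leNgt; apply/negP => lam_lt_mu.
have Sd : S *m (u - u') = 0 by rewrite mulmxBr Su Su' subrr.
have objE := trs_obj_sub stat_u' (etrans norm_u (esym norm_u')).
have obj_le := u_min u' (conj Su' norm_u').
have psd_d := psd _ Sd; rewrite dot_shift in objE; rewrite dot_shift in psd_d.
have : (mu - lam) * dot (u - u') (u - u') <= 0 by lra.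
rewrite pmulr_rle0 ?subr_gt0 // => D_le0.
have u_eq : u = u'.
  by apply/eqP; rewrite -subr_eq0 -dot_eq0 eq_le D_le0 dot_ge0.
have : (mu - lam) *: u = 0 by rewrite scalerBl -stat_u {2}u_eq -stat_u' u_eq subrr.
move/eqP; rewrite scaler_eq0 subr_eq0 (gt_eqF lam_lt_mu) /= => /eqP u_eq0.
by move: N_gt0; rewrite -norm_u u_eq0 dot0l ltxx.
Qed.

Lemma trs_multiplier_le_qep u mu :
  trs_minimizer u -> H *m u + g = mu *: u -> psd_on_ker (H - mu%:M) ->
  forall lam z, qep_feasible lam z -> mu <= lam.
Proof.
move=> u_min stat_u psd lam z zfeas.
have [gz_eq0|gz_neq0] := eqVneq (dot g z) 0; last first.
  have [u' [u'_feas stat_u']] := qep_feasible_stationary zfeas gz_neq0.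
  exact: trs_multiplier_le_stationary u_min stat_u psd u'_feas stat_u'.
have := qep_shift_norm zfeas; rewrite gz_eq0 expr0n mulr0 => /eqP; rewrite dot_eq0.
move=> /eqP Mz; have [z_neq0 [Sz _]] := zfeas.
have Hz : H *m z = lam *: z by apply/eqP; rewrite -subr_eq0 -mul_scalar_mx -mulmxBl Mz.
have := psd z Sz; rewrite dot_shift Hz dotZr -mulrBl.
by rewrite pmulr_lge0 ?dot_gt0 // subr_ge0.
Qed.

Lemma trs_hard_case u mu w :
  trs_minimizer u -> H *m u + g = mu *: u -> psd_on_ker (H - mu%:M) ->
  S *m w = 0 -> w != 0 -> dot w ((H - mu%:M) *m w) <= 0 ->
  qep_minimizer mu w /\ dot g w = 0.
Proof.
move=> u_min stat_u psd Sw w_neq0 w_le0.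
have Mw : (H - mu%:M) *m w = 0.
  apply: (psd_isotropic_ker (S := S) (trmx_shift mu) (@ker_shift mu) psd Sw).
  by apply/eqP; rewrite eq_le w_le0 psd.
have Hw : H *m w = mu *: w by apply/eqP; rewrite -subr_eq0 -mul_scalar_mx -mulmxBl Mw.
have gw : dot g w = 0.
  have gE : g = mu *: u - H *m u by rewrite -stat_u addrC addKr.
  rewrite gE dotBl dotZl (dotC (H *m u)) (dot_mulmx_sym _ _ H_sym) Hw dotZr.
  by rewrite (dotC u w) subrr.
split=> //; split; last exact: trs_multiplier_le_qep u_min stat_u psd.
by do 2!split=> //; rewrite Mw mulmx0 -mulmxA mulmx_dot gw scale0r scaler0.
Qed.

End TrustRegion.

Section Existence.
Local Open Scope classical_set_scope.
Variables (R : realType) (n : nat).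

Lemma continuous_mulmx_coord p (M : 'M[R]_(n, p)) j :
  continuous (fun r : 'rV[R]_n => (r *m M) 0 j).
Proof.
have -> : (fun r : 'rV[R]_n => (r *m M) 0 j) = fun r => \sum_k r 0 k * M k j.
  by apply/funext => r; rewrite mxE.
apply: (continuous_big add_continuous) => k _ r.
by apply: continuousM; [exact: coord_continuous | exact: cst_continuous].
Qed.

Lemma continuous_quad (A : 'M[R]_n) :
  continuous (fun r : 'rV[R]_n => (r *m A *m r^T) 0 0).
Proof.
have -> : (fun r : 'rV[R]_n => (r *m A *m r^T) 0 0) =
    fun r => \sum_k (r *m A) 0 k * r 0 k.
  by apply/funext => r; rewrite [LHS]mxE; under eq_bigr do rewrite [_^T _ _]mxE.
apply: (continuous_big add_continuous) => k _ r.
by apply: continuousM; [exact: continuous_mulmx_coord | exact: coord_continuous].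
Qed.


Lemma crq_minimizer_exists m (A : 'M[R]_n) (C : 'M[R]_(n, m)) (b : 'cV[R]_m) :
  (exists v, CRQ_feasible C b v) -> exists v, CRQ_minimizer A C b v.
Proof.
(* The compactness results of the library are stated for row vectors. *)
move=> [v0 v0_feas]; pose F := [set r : 'rV[R]_n | CRQ_feasible C b r^T].
have level_closed (f : 'rV[R]_n -> R) c : continuous f -> closed (f @^-1` [set c]).
  by move=> f_cont; apply: preimage_closed => [r _|]; [exact: f_cont | exact: closed_eq].
have FE : F = (fun r => (r *m 1%:M *m r^T) 0 0) @^-1` [set 1] `&`
    \bigcap_(j in setT) (fun r => (r *m C) 0 j) @^-1` [set b j 0].
  apply/seteqP; split=> r; rewrite /F /CRQ_feasible /sqnorm /= trmxK mulmx1.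
    by case=> -> Cr; split=> // j _; rewrite /preimage /= -[r *m C]trmxK trmx_mul Cr mxE.
  case=> -> Cr; split=> //; apply/matrixP => i j; rewrite (ord1 j).
  by rewrite -[C^T *m r^T]trmxK trmx_mul !trmxK mxE; exact: Cr.
have F_closed : closed F.
  rewrite FE; apply: closedI; first exact/level_closed/continuous_quad.
  by apply: closed_bigI => j _; exact/level_closed/continuous_mulmx_coord.
have F_bounded : bounded_set F.
  exists 1; split=> // M M_gt1 r [r_norm _]; change (mx_norm r <= M); rewrite mx_normrE.
  apply: bigmax_le => [|[i j] _]; first by rewrite ltW ?(lt_trans _ M_gt1).
  rewrite /= (ord1 i) (le_trans _ (ltW M_gt1)) //.
  have := coord_sqr_le_dot r^T j; rewrite mxE [dot _ _]r_norm => r2_le1.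
  by rewrite ler_norml; apply/andP; split; nra.
have F_neq0 : F !=set0 by exists v0^T; rewrite /F /= trmxK.
have [r r_in r_min] := EVT_min_rV F_neq0 (bounded_closed_compact F_bounded F_closed)
  (continuous_subspaceT (continuous_quad (A := A))).
exists r^T; split; first by move: r_in; rewrite inE.
move=> w w_feas; have := r_min w^T; rewrite inE /F /= trmxK => /(_ w_feas).
by rewrite trmxK.
Qed.

End Existence.

Lemma unitmx_trmx_mul (R : realFieldType) n m (C : 'M[R]_(n, m)) :
  \rank C = m -> C^T *m C \in unitmx.
Proof.
move=> rankC; rewrite -row_free_unit; apply: inj_row_free => v vCC.
have Cv : C *m v^T = 0.
  apply/eqP; rewrite -dot_eq0 /dot trmx_mul trmxK mulmxA -(mulmxA v) vCC mul0mx.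
  by rewrite mxE.
have trC_free : row_free C^T by rewrite /row_free mxrank_tr rankC.
apply/eqP; rewrite -(mulmx_free_eq0 _ trC_free) -trmx_eq0 trmx_mul trmxK.
by rewrite Cv.
Qed.

Lemma trs_feasible_exists (R : rcfType) n p (S : 'M[R]_(p, n)) r :
  (p < n)%N -> exists x, trs_feasible S (r ^+ 2) x.
Proof.
move=> lt_pn.
have [e Se e_neq0] : exists2 e : 'cV[R]_n, S *m e = 0 & e != 0.
  have : kermx S^T != 0.
    by rewrite -mxrank_eq0 mxrank_ker -lt0n subn_gt0 (leq_ltn_trans (rank_leq_col _)).
  case/rowV0Pn => y /sub_kermxP yS y_neq0; exists y^T; last by rewrite trmx_eq0.
  by rewrite -[S]trmxK -trmx_mul yS trmx0.
have e_gt0 : 0 < dot e e by rewrite dot_gt0.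
exists ((r / Num.sqrt (dot e e)) *: e); split; first by rewrite -scalemxAr Se scaler0.
rewrite dotZl dotZr mulrA -expr2 expr_div_n sqr_sqrtr ?ltW //.
by rewrite divfK ?gt_eqF.
Qed.

Section Reduction.
Variables (R : realType) (n m : nat) (A : 'M[R]_n) (C : 'M[R]_(n, m)) (b : 'cV[R]_m).
Hypothesis rankC : \rank C = m.
Implicit Types (u v : 'cV[R]_n).

Let unitmx_CtC : C^T *m C \in unitmx := unitmx_trmx_mul rankC.

Lemma trmx_projP : (projP C)^T = projP C.
Proof.
rewrite /projP linearB /= trmx1 !trmx_mul trmxK trmx_inv trmx_mul trmxK.
by rewrite mulmxA.
Qed.

Lemma trmxC_projP : C^T *m projP C = 0.
Proof. by rewrite /projP mulmxBr mulmx1 !mulmxA mulmxV // mul1mx subrr. Qed.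

Lemma projP_ker u : C^T *m u = 0 -> projP C *m u = u.
Proof. by move=> Cu; rewrite /projP mulmxBl mul1mx -!mulmxA Cu !mulmx0 subr0. Qed.

Lemma trmxC_n0 : C^T *m n0 C b = b.
Proof. by rewrite /n0 !mulmxA mulmxV // mul1mx. Qed.

Lemma dot_n0_ker u : C^T *m u = 0 -> dot (n0 C b) u = 0.
Proof. by move=> Cu; rewrite /n0 -mulmxA dotC dot_mulmx Cu dot0l. Qed.

Lemma sqnorm_n0D u : C^T *m u = 0 ->
  sqnorm (n0 C b + u) = sqnorm (n0 C b) + dot u u.
Proof.
move=> Cu; rewrite /sqnorm -/(dot (n0 C b + u) _) -/(dot (n0 C b) _).
by rewrite !dotDl !dotDr (dotC u) (dot_n0_ker Cu) addr0 add0r.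
Qed.

Lemma gam_sqr : sqnorm (n0 C b) <= 1 -> gam C b ^+ 2 = 1 - sqnorm (n0 C b).
Proof. by move=> n0_le1; rewrite /gam sqr_sqrtr // subr_ge0. Qed.

Lemma crq_feasible_shift v : sqnorm (n0 C b) <= 1 ->
  CRQ_feasible C b v <-> trs_feasible C^T (gam C b ^+ 2) (v - n0 C b).
Proof.
move=> n0_le1; rewrite gam_sqr //.
have vE : v = n0 C b + (v - n0 C b) by rewrite addrC subrK.
split=> [[v_norm Cv] | [Cu u_norm]].
  have Cu : C^T *m (v - n0 C b) = 0 by rewrite mulmxBr Cv trmxC_n0 subrr.
  by split=> //; move: v_norm; rewrite {1}vE sqnorm_n0D //; lra.
split; first by rewrite vE sqnorm_n0D // u_norm; lra.
by apply/eqP; rewrite -subr_eq0 -trmxC_n0 -mulmxBr Cu.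
Qed.

Lemma crq_feasible_exists : (m < n)%N -> sqnorm (n0 C b) <= 1 ->
  exists v, CRQ_feasible C b v.
Proof.
move=> lt_mn n0_le1; have [u u_feas] := trs_feasible_exists C^T (gam C b) lt_mn.
by exists (n0 C b + u); apply/crq_feasible_shift; rewrite // addrC addKr.
Qed.

Hypothesis A_sym : A^T = A.

Lemma trmx_PAP : (projP C *m A *m projP C)^T = projP C *m A *m projP C.
Proof. by rewrite !trmx_mul trmx_projP A_sym mulmxA. Qed.

Lemma trmxC_PAP : C^T *m (projP C *m A *m projP C) = 0.
Proof. by rewrite !mulmxA trmxC_projP !mul0mx. Qed.

Lemma trmxC_b0 : C^T *m b0 A C b = 0.
Proof. by rewrite /b0 !mulmxA trmxC_projP !mul0mx. Qed.

Lemma crq_obj_shift u : C^T *m u = 0 ->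
  ((n0 C b + u)^T *m A *m (n0 C b + u)) 0 0 =
  trs_obj (projP C *m A *m projP C) (b0 A C b) u + dot (n0 C b) (A *m n0 C b).
Proof.
move=> Cu.
have uHu : dot u (projP C *m A *m projP C *m u) = dot u (A *m u).
  by rewrite -!mulmxA (projP_ker Cu) dot_mulmx trmx_projP (projP_ker Cu).
have b0u : dot (b0 A C b) u = dot u (A *m n0 C b).
  by rewrite /b0 -!mulmxA dotC dot_mulmx trmx_projP (projP_ker Cu).
rewrite quad_dot /trs_obj uHu b0u mulmxDr !dotDl !dotDr.
by rewrite (dot_mulmx_sym (n0 C b) u A_sym); ring.
Qed.

Lemma crq_trs_minimizer v : sqnorm (n0 C b) <= 1 -> CRQ_minimizer A C b v ->
  trs_minimizer C^T (projP C *m A *m projP C) (b0 A C b) (gam C b ^+ 2) (v - n0 C b).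
Proof.
move=> n0_le1 [v_feas v_min]; have u_feas := (crq_feasible_shift v n0_le1).1 v_feas.
split=> // x x_feas.
have nx_feas : CRQ_feasible C b (n0 C b + x).
  by apply/crq_feasible_shift; rewrite // addrC addKr.
have vE : v = n0 C b + (v - n0 C b) by rewrite addrC subrK.
have := v_min _ nx_feas; rewrite [in X in X <= _]vE.
by rewrite (crq_obj_shift u_feas.1) (crq_obj_shift x_feas.1) lerD2r.
Qed.

End Reduction.

Theorem theorem2p13 (R : realType) (n m : nat)
  (A : 'M[R]_n) (C : 'M[R]_(n, m)) (b : 'cV[R]_m) :
  A^T = A ->
  (m < n)%N ->
  \rank C = m ->
  sqnorm (n0 C b) < 1 ->
  b0 A C b != 0 ->
  QEP_easy_case A C b ->
  exists v : 'cV[R]_n,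
    CRQ_minimizer A C b v /\ (forall w, CRQ_minimizer A C b w -> w = v).
Proof.
(* [b0 A C b != 0] is not needed: the easy case is only used to refute the
   hard case. *)
move=> A_sym lt_mn rankC n0_lt1 _ easy; have n0_le1 := ltW n0_lt1.
have N_gt0 : 0 < gam C b ^+ 2 by rewrite gam_sqr // subr_gt0.
have H_sym := trmx_PAP C A_sym; have CH := trmxC_PAP A rankC.
have Cg := trmxC_b0 A b rankC.
have [v v_min] := crq_minimizer_exists A (crq_feasible_exists rankC lt_mn n0_le1).
have u_min := crq_trs_minimizer rankC A_sym n0_le1 v_min.
have [mu stat psd] := trs_minimizer_kkt H_sym CH Cg N_gt0 u_min.
have pd w : C^T *m w = 0 -> w != 0 ->
    0 < dot w ((projP C *m A *m projP C - mu%:M) *m w).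
  move=> Cw w_neq0; rewrite ltNge; apply/negP => w_le0; apply: easy.
  (* [QEP_minimizer A C b] unfolds to [qep_minimizer] with [S := C^T],
     [H := P A P], [g := b0] and [N := gam ^+ 2]. *)
  by exists mu, w; exact (trs_hard_case H_sym CH N_gt0 u_min stat psd Cw w_neq0 w_le0).
exists v; split=> // w w_min; apply: (addIr (- n0 C b)).
have w_trs := crq_trs_minimizer rankC A_sym n0_le1 w_min.
exact (trs_minimizer_unique H_sym u_min.1 stat pd w_trs).
Qed.
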